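(* Let $a,b\in\mathbb{C}$ with $a,b,a+b\notin\{0,-1\}$, and suppose $a\ne b$, $a\ne1$, $b\ne1$. Then $R_{a,b}$ has rank $6$ as a module over $\mathbb{C}[P_2,P_3]$.
   Context: For $a,b\in\mathbb{C}$, let $P_i=ax^i+by^i+(-ax-by)^i\in\mathbb{C}[x,y]$ for $i\ge2$, and let $R_{a,b}$ be the subalgebra of $\mathbb{C}[x,y]$ generated by the $P_i$, $i\ge2$. *)

(* C := complex numbers = (Stdlib R)[i] from mathcomp-real-closed;
   C[x,y] is represented as {poly {poly C}} with x := 'X%:P (inner variable)
   and y := 'X (outer variable). *)
From HB Require Import structures.
From mathcomp Require Import all_boot all_order all_algebra.
From mathcomp Require Import complex Rstruct.
Set Implicit Arguments. Unset Strict Implicit. Unset Printing Implicit Defensive.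
Import Order.TTheory GRing.Theory Num.Theory.
Local Open Scope ring_scope.

Definition CC : Type := complex Rdefinitions.R.

Definition Cxy := {poly {poly CC}}.
Definition varx : Cxy := 'X%:P.
Definition vary : Cxy := 'X.
Definition cstxy (c : CC) : Cxy := c%:P%:P.

Definition Pab (a b : CC) (i : nat) : Cxy :=
  cstxy a * varx ^+ i + cstxy b * vary ^+ i
  + (- (cstxy a * varx) - cstxy b * vary) ^+ i.

Inductive in_subalg (G : Cxy -> Prop) : Cxy -> Prop :=
| subalg_const c : in_subalg G (cstxy c)
| subalg_gen f : G f -> in_subalg G f
| subalg_add f g : in_subalg G f -> in_subalg G g -> in_subalg G (f + g)
| subalg_mul f g : in_subalg G f -> in_subalg G g -> in_subalg G (f * g).

Definition Rab (a b : CC) : Cxy -> Prop :=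
  in_subalg (fun f => exists2 i : nat, (2 <= i)%N & f = Pab a b i).

Definition A23 (a b : CC) : Cxy -> Prop :=
  in_subalg (fun f => f = Pab a b 2 \/ f = Pab a b 3).

Definition lin_indep_over (A : Cxy -> Prop) (n : nat) (v : 'I_n -> Cxy) : Prop :=
  forall c : 'I_n -> Cxy, (forall j, A (c j)) ->
    \sum_(j < n) c j * v j = 0 -> forall j, c j = 0.

(* M (a torsion-free module over the domain A, both inside C[x,y]) has rank r:
   the maximal number of A-linearly independent elements of M is r
   (equivalently dim over Frac A of Frac A (x)_A M). *)
Definition has_rank_over (A M : Cxy -> Prop) (r : nat) : Prop :=
  (exists v : 'I_r -> Cxy, (forall j, M (v j)) /\ lin_indep_over A v) /\
  (forall v : 'I_r.+1 -> Cxy, (forall j, M (v j)) -> ~ lin_indep_over A v).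

From mathcomp Require Import all_boot all_order all_algebra.
From mathcomp Require Import complex Rstruct.
From mathcomp Require Import ring zify.
Set Implicit Arguments.
Unset Strict Implicit.
Unset Printing Implicit Defensive.
Import GRing.Theory Num.Theory.
Local Open Scope ring_scope.

(* Upper bound: the monomials 1, x, y, x^2, xy, x^3 span C[x,y] over A = C[P_2, P_3],
   because x^2 y, x y^2, y^2, x^4 and x^3 y are A-combinations of them up to constant
   factors that are products of the excluded linear forms in a, b; seven elements of a
   module spanned by six are A-dependent by fraction-free elimination.
   Lower bound: restrict to the two lines through the origin on which P_2 vanishes.
   There P_3 becomes p_i t^3 with p_i <> 0 and P_j a multiple of t^j, so a relation
   sum_j q_j(P_2, P_3) w_j = 0 among 1, P_4, P_5, P_6 and two more elements of degrees
   1 and 2 mod 3 splits by degree mod 3 into 2x2 linear systems with nonzero determinant.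
   Hence every q_j(0, t) vanishes, P_2 divides every q_j, and induction on the degree in
   P_2 concludes.  The two lines are conjugate under the square root of
   disc = -ab(1 + a + b), so the determinants are computed in a quadratic extension
   and factor into the excluded linear forms, up to the exceptional loci W4 = 0 and
   W5 = 0, where P_7 and P_8 replace P_4 P_6 and P_5 P_6. *)

Section SubalgebraClosure.
Variable G : Cxy -> Prop.

Lemma in_subalg0 : in_subalg G 0.
Proof. by have := subalg_const G 0; rewrite /cstxy !rmorph0. Qed.

Lemma in_subalg1 : in_subalg G 1.
Proof. by have := subalg_const G 1; rewrite /cstxy !rmorph1. Qed.

Lemma in_subalgN f : in_subalg G f -> in_subalg G (- f).
Proof.
move=> Gf; rewrite -mulN1r; apply: subalg_mul Gf.
by have := subalg_const G (-1); rewrite /cstxy !rmorphN1.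
Qed.

End SubalgebraClosure.

(** * Spans and linear relations over a subring *)

Section Span.
Variables (R : comNzRingType) (S : R -> Prop).
Hypotheses (S0 : S 0) (S1 : S 1).
Hypotheses (SD : forall x y, S x -> S y -> S (x + y)).
Hypotheses (SM : forall x y, S x -> S y -> S (x * y)).
Variables (n : nat) (e : 'I_n -> R).

Definition in_span (f : R) : Prop :=
  exists2 c : 'I_n -> R, forall i, S (c i) & f = \sum_(i < n) c i * e i.

Lemma in_span0 : in_span 0.
Proof. by exists (fun=> 0) => //; rewrite big1 // => i _; rewrite mul0r. Qed.

Lemma in_spanD f g : in_span f -> in_span g -> in_span (f + g).
Proof.
move=> [c Sc ->] [d Sd ->]; exists (fun i => c i + d i) => [i|]; first exact: SD.
by rewrite -big_split; apply: eq_bigr => i _; rewrite mulrDl.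
Qed.

Lemma in_span_mull g f : S g -> in_span f -> in_span (g * f).
Proof.
move=> Sg [c Sc ->]; exists (fun i => g * c i) => [i|]; first exact: SM.
by rewrite mulr_sumr; apply: eq_bigr => i _; rewrite mulrA.
Qed.

Lemma in_span_basis i : in_span (e i).
Proof.
exists (fun j => if j == i then 1 else 0) => [j|]; first by case: eqP.
rewrite (bigD1 i) //= eqxx mul1r big1 ?addr0 // => j /negbTE->.
by rewrite mul0r.
Qed.

Lemma in_span_mul_closed g :
  (forall i, in_span (g * e i)) -> forall f, in_span f -> in_span (g * f).
Proof.
move=> ge f [c Sc ->]; rewrite mulr_sumr.
elim/big_rec: _ => [|i h _ Sh]; first exact: in_span0.
by apply: in_spanD Sh; rewrite mulrCA; apply: in_span_mull.
Qed.

End Span.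

Section Relations.
Variables (R : idomainType) (S : R -> Prop).
Hypotheses (S0 : S 0) (S1 : S 1).
Hypotheses (SD : forall x y, S x -> S y -> S (x + y)).
Hypotheses (SM : forall x y, S x -> S y -> S (x * y)).
Hypothesis SN : forall x, S x -> S (- x).

Lemma S_sum m (F : 'I_m -> R) : (forall k, S (F k)) -> S (\sum_(k < m) F k).
Proof. by move=> SF; elim/big_rec: _ => // k x _; apply: SD. Qed.

(* Fraction-free elimination: scale the rows by a pivot of the last column so that
   the column can be cleared without division, then recurse. *)
Lemma rows_relation n (C : 'I_n.+1 -> 'I_n -> R) : (forall k i, S (C k i)) ->
  exists c : 'I_n.+1 -> R, [/\ forall k, S (c k), exists k, c k != 0 &
    forall i, \sum_(k < n.+1) c k * C k i = 0].
Proof.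
elim: n C => [|n IH] C SC.
  by exists (fun=> 1); split=> //; [exists ord0; rewrite oner_neq0 | case].
have [p [d [d_neq0 Sd pivot]]] : exists p d, [/\ d != 0, S d &
    forall k, (d - C p ord_max) * C (lift p k) ord_max = 0].
  case: (pickP (fun k => C k ord_max != 0)) => [p Cp | C0].
    by exists p, (C p ord_max); split=> // k; rewrite subrr mul0r.
  exists ord0, 1; split; rewrite ?oner_neq0 // => k.
  by move: (C0 (lift ord0 k)) => /negbFE/eqP->; rewrite mulr0.
pose C' k i := d * C (lift p k) (lift ord_max i) - C (lift p k) ord_max * C p (lift ord_max i).
have [|c' [Sc' [k0 c'k0] c'C']] := IH C'.
  by move=> k i; apply: SD; [apply: SM | apply/SN/SM].
pose c k := if unlift p k is Some k' then c' k' * d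
            else - \sum_(k' < n.+1) c' k' * C (lift p k') ord_max.
have c_p : c p = - \sum_(k' < n.+1) c' k' * C (lift p k') ord_max.
  by rewrite /c unlift_none.
have c_lift k' : c (lift p k') = c' k' * d by rewrite /c liftK.
exists c; split.
- move=> k; rewrite /c; case: (unlift p k) => [k'|]; first exact: SM.
  by apply/SN/S_sum => k'; apply: SM.
- by exists (lift p k0); rewrite c_lift mulf_neq0.
move=> i; rewrite (bigD1_ord p) //= c_p mulNr mulr_suml -sumrN -big_split /=.
case: (unliftP ord_max i) => [i'|] ->.
  transitivity (\sum_(k < n.+1) c' k * C' k i'); last exact: c'C' i'.
  by apply: eq_bigr => k _; rewrite c_lift /C'; ring.
apply: big1 => k _; rewrite c_lift.
by transitivity (c' k * ((d - C p ord_max) * C (lift p k) ord_max));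
  [ring | rewrite pivot mulr0].
Qed.

Lemma span_dependent n (e : 'I_n -> R) (v : 'I_n.+1 -> R) :
  (forall k, in_span S e (v k)) ->
  exists c : 'I_n.+1 -> R, [/\ forall k, S (c k), exists k, c k != 0 &
    \sum_(k < n.+1) c k * v k = 0].
Proof.
move=> /fin_all_exists2[C SC vE].
have [c [Sc c_neq0 cC]] := rows_relation SC.
exists c; split => //.
under eq_bigr => k _ do rewrite vE mulr_sumr.
rewrite exchange_big big1 // => i _.
by under eq_bigr => k _ do rewrite mulrA; rewrite -mulr_suml cC mul0r.
Qed.

End Relations.

(** * Six monomials span C[x,y] over C[P_2, P_3] *)

Definition monomials : seq Cxy :=
  [:: 1; varx; vary; varx ^+ 2; varx * vary; varx ^+ 3].

Definition basis6 (i : 'I_6) : Cxy := monomials`_i.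

Section Spanning.
Variables a b : CC.

Local Notation A := (A23 a b).
Local Notation P2 := (Pab a b 2).
Local Notation P3 := (Pab a b 3).
Local Notation span := (in_span A basis6).
Local Notation "[ 'coord' c0 ; c1 ; c2 ; c3 ; c4 ; c5 ]" :=
  (\sum_(i < 6) [:: c0; c1; c2; c3; c4; c5]`_i * basis6 i).

Lemma A23_cst c : A (cstxy c). Proof. exact: subalg_const. Qed.
Lemma A23_P2 : A P2. Proof. by apply: subalg_gen; left. Qed.
Lemma A23_P3 : A P3. Proof. by apply: subalg_gen; right. Qed.

Lemma A23_0 : A 0. Proof. exact: in_subalg0. Qed.
Lemma A23_mul f g : A f -> A g -> A (f * g). Proof. exact: subalg_mul. Qed.
Lemma A23_cstM c f : A f -> A (cstxy c * f). Proof. exact/A23_mul/A23_cst. Qed.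

Lemma A23_exp f n : A f -> A (f ^+ n).
Proof.
move=> Af; elim: n => [|n IHn]; first exact: in_subalg1.
by rewrite exprS; apply: A23_mul.
Qed.

Lemma x2y_coord :
  cstxy (a * (a + b + 1) * (b - 1)) * (varx ^+ 2 * vary) =
  [coord cstxy (b + 1) * P3; cstxy (a * (b + 2)) * P2; cstxy ((b + 1) * (b - 1)) * P2;
         0; 0; cstxy (- (a * (a + 1) * (a + b + 1)))].
Proof. by rewrite !big_ord_recr big_ord0 /= /basis6 /= /Pab /cstxy; ring. Qed.

Lemma xy2_coord :
  cstxy (b * (a + b + 1) * (b - 1)) * (varx * vary ^+ 2) =
  [coord cstxy (- (2 * b)) * P3; cstxy (- (2 * a * b + a - b + 1)) * P2;
         cstxy (- (2 * b * (b - 1))) * P2; 0; 0; cstxy (a * (a + 1) * (a + b + 1))].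
Proof. by rewrite !big_ord_recr big_ord0 /= /basis6 /= /Pab /cstxy; ring. Qed.

Lemma x4_coord :
  cstxy (a * (a + 1) * (a + b) * (a + b + 1)) * varx ^+ 4 =
  [coord cstxy (- (b - 1) ^+ 2) * P2 ^+ 2; cstxy (b * (3 * a + b + 1 - a * b)) * P3;
         cstxy (- (b * (b + 1) * (b - 1))) * P3;
         cstxy (a * (a * b + 2 * a + 3 * b ^+ 2 - 2 * b + 2)) * P2;
         cstxy (b * (b - 1) * (b + 1 - a)) * P2; 0].
Proof. by rewrite !big_ord_recr big_ord0 /= /basis6 /= /Pab /cstxy; ring. Qed.

Lemma x3y_coord :
  cstxy (a * (a + b) * (a + b + 1)) * (varx ^+ 3 * vary) =
  [coord cstxy (b - 1) * P2 ^+ 2; cstxy (a * (b - 1)) * P3; cstxy (b * (b + 1)) * P3;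
         cstxy (- (2 * a * (b - 1))) * P2; cstxy (a * (2 * b + 1)) * P2; 0].
Proof. by rewrite !big_ord_recr big_ord0 /= /basis6 /= /Pab /cstxy; ring. Qed.

Lemma y2_coord :
  cstxy (b * (b + 1)) * vary ^+ 2 =
  [coord P2; 0; 0; cstxy (- (a * (a + 1))); cstxy (- (2 * a * b)); 0].
Proof. by rewrite !big_ord_recr big_ord0 /= /basis6 /= /Pab /cstxy; ring. Qed.

Hypotheses (a_neq0 : a != 0) (a_neqN1 : a != -1) (b_neq0 : b != 0) (b_neqN1 : b != -1).
Hypotheses (ab_neq0 : a + b != 0) (ab_neqN1 : a + b != -1) (b_neq1 : b != 1).

Let a1_neq0 : a + 1 != 0. Proof. by rewrite addr_eq0. Qed.
Let b1_neq0 : b + 1 != 0. Proof. by rewrite addr_eq0. Qed.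
Let ab1_neq0 : a + b + 1 != 0. Proof. by rewrite addr_eq0. Qed.
Let bN1_neq0 : b - 1 != 0. Proof. by rewrite subr_eq0. Qed.

Lemma span_coord d m (s : seq Cxy) : d != 0 -> (forall i : 'I_6, A s`_i) ->
  cstxy d * m = \sum_(i < 6) s`_i * basis6 i -> span m.
Proof.
move=> d_neq0 As dm; exists (fun i => cstxy d^-1 * s`_i) => [i|]; first exact: A23_cstM.
have -> : m = cstxy d^-1 * (cstxy d * m).
  by rewrite mulrA /cstxy -!rmorphM mulVf // !rmorph1 mul1r.
by rewrite dm mulr_sumr; apply: eq_bigr => i _; rewrite mulrA.
Qed.

Lemma A23_coord c0 c1 c2 c3 c4 c5 : A c0 -> A c1 -> A c2 -> A c3 -> A c4 -> A c5 ->
  forall i : 'I_6, A [:: c0; c1; c2; c3; c4; c5]`_i.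
Proof. by move=> ? ? ? ? ? ? [[|[|[|[|[|[|//]]]]]] ?]. Qed.

Lemma span_x2y : span (varx ^+ 2 * vary).
Proof.
apply: (span_coord _ _ x2y_coord); first by rewrite !mulf_neq0.
exact: A23_coord (A23_cstM _ A23_P3) (A23_cstM _ A23_P2) (A23_cstM _ A23_P2)
  A23_0 A23_0 (A23_cst _).
Qed.

Lemma span_xy2 : span (varx * vary ^+ 2).
Proof.
apply: (span_coord _ _ xy2_coord); first by rewrite !mulf_neq0.
exact: A23_coord (A23_cstM _ A23_P3) (A23_cstM _ A23_P2) (A23_cstM _ A23_P2)
  A23_0 A23_0 (A23_cst _).
Qed.

Lemma span_x4 : span (varx ^+ 4).
Proof.
apply: (span_coord _ _ x4_coord); first by rewrite !mulf_neq0.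
exact: A23_coord (A23_cstM _ (A23_exp 2 A23_P2)) (A23_cstM _ A23_P3) (A23_cstM _ A23_P3)
  (A23_cstM _ A23_P2) (A23_cstM _ A23_P2) A23_0.
Qed.

Lemma span_x3y : span (varx ^+ 3 * vary).
Proof.
apply: (span_coord _ _ x3y_coord); first by rewrite !mulf_neq0.
exact: A23_coord (A23_cstM _ (A23_exp 2 A23_P2)) (A23_cstM _ A23_P3) (A23_cstM _ A23_P3)
  (A23_cstM _ A23_P2) (A23_cstM _ A23_P2) A23_0.
Qed.

Lemma span_y2 : span (vary ^+ 2).
Proof.
apply: (span_coord _ _ y2_coord); first by rewrite !mulf_neq0.
exact: A23_coord A23_P2 A23_0 A23_0 (A23_cst _) (A23_cst _) A23_0.
Qed.

Lemma span_monomial k : (k < 6)%N -> span monomials`_k.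
Proof.
by move=> lt_k6; apply: (in_span_basis (in_subalg0 _) (in_subalg1 _) basis6 (Ordinal lt_k6)).
Qed.

Lemma span_mulx f : span f -> span (varx * f).
Proof.
apply: (in_span_mul_closed (in_subalg0 _) (@subalg_add _) (@subalg_mul _)).
case=> [[|[|[|[|[|[|//]]]]]] ?]; rewrite [basis6 _]/basis6 /=.
- by rewrite mulr1; exact: (@span_monomial 1 isT).
- by rewrite -expr2; exact: (@span_monomial 3 isT).
- exact: (@span_monomial 4 isT).
- by rewrite -exprS; exact: (@span_monomial 5 isT).
- by rewrite mulrA -expr2; apply: span_x2y.
- by rewrite -exprS; apply: span_x4.
Qed.

Lemma span_muly f : span f -> span (vary * f).
Proof.
apply: (in_span_mul_closed (in_subalg0 _) (@subalg_add _) (@subalg_mul _)).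
case=> [[|[|[|[|[|[|//]]]]]] ?]; rewrite [basis6 _]/basis6 /=.
- by rewrite mulr1; exact: (@span_monomial 2 isT).
- by rewrite mulrC; exact: (@span_monomial 4 isT).
- by rewrite -expr2; apply: span_y2.
- by rewrite mulrC; apply: span_x2y.
- by rewrite mulrCA -expr2; apply: span_xy2.
- by rewrite mulrC; apply: span_x3y.
Qed.

Lemma span_all f : span f.
Proof.
have span_cst c : span (cstxy c).
  rewrite -[cstxy c]mulr1; apply: (in_span_mull (@subalg_mul _) (A23_cst c)).
  exact: (@span_monomial 0 isT).
have span_inner (p : {poly CC}) : span p%:P.
  elim/poly_ind: p => [|p c IHp]; first by rewrite rmorph0; apply: in_span0; exact: in_subalg0.
  rewrite rmorphD rmorphM /= mulrC; apply: (in_spanD (@subalg_add _)) (span_cst c).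
  exact: span_mulx.
elim/poly_ind: f => [|f p IHf]; first by apply: in_span0; exact: in_subalg0.
rewrite mulrC; apply: (in_spanD (@subalg_add _)) (span_inner p).
exact: span_muly.
Qed.

Lemma upper_bound (v : 'I_7 -> Cxy) : ~ lin_indep_over A v.
Proof.
move=> indep.
have [c [Ac [k ck_neq0] cv0]] := span_dependent (in_subalg0 _) (in_subalg1 _)
  (@subalg_add _) (@subalg_mul _) (@in_subalgN _) (fun k => span_all (v k)).
by move/eqP: ck_neq0; apply; apply: indep.
Qed.

End Spanning.

(** * Relations restricted to two lines *)

Section CubeTerms.
Variable F : fieldType.
Implicit Types (G H : {poly F}) (c p : F) (d : nat).

Lemma coef_comp_scaleX G c i : (G \Po (c *: 'X))`_i = G`_i * c ^+ i.
Proof.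
elim/poly_ind: G i => [|G k IHG] i; first by rewrite comp_poly0 !coef0 mul0r.
rewrite comp_polyD comp_polyM comp_polyX comp_polyC coefD coefC -scalerAr coefZ.
rewrite coefMX coefD coefMX coefC.
case: i => [|i] /=; first by rewrite ?mulr0 ?add0r ?addr0 expr0 mulr1.
by rewrite IHG addr0 exprS; ring.
Qed.

Definition cube_term G c p d : {poly F} := (G \Po (p%:P * 'X^3)) * (c%:P * 'X^d).

Lemma coef_cube_term G c p d m : (cube_term G c p d)`_m =
  if (m < d)%N then 0 else
  if (3 %| m - d)%N then c * (G`_((m - d) %/ 3) * p ^+ ((m - d) %/ 3)) else 0.
Proof.
rewrite /cube_term mulrCA coefCM coefMXn.
have -> : G \Po (p%:P * 'X^3) = (G \Po (p *: 'X)) \Po 'X^3.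
  by rewrite -comp_polyA comp_polyZ comp_polyX mul_polyC.
case: ifP => _; first by rewrite mulr0.
by rewrite coef_comp_poly_Xn //; case: ifP; rewrite ?coef_comp_scaleX ?mulr0.
Qed.

Lemma coef_cube_term_same G c p (r j i : nat) :
  (cube_term G c p (r + 3 * j))`_(r + 3 * i) =
  if (i < j)%N then 0 else c * (G`_(i - j) * p ^+ (i - j)).
Proof.
rewrite coef_cube_term ltn_add2l ltn_pmul2l //; case: ltnP => // le_ji.
have -> : (r + 3 * i - (r + 3 * j) = 3 * (i - j))%N by lia.
by rewrite dvdn_mulr // mulKn.
Qed.

Lemma coef_cube_term_other G c p (r r' j i : nat) :
  (r < 3)%N -> (r' < 3)%N -> r != r' -> (cube_term G c p (r' + 3 * j))`_(r + 3 * i) = 0.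
Proof.
move=> lt_r3 lt_r'3 neq_rr'; rewrite coef_cube_term; case: ltnP => // le_jd.
by case: ifP => // /dvdnP[q Eq]; move/eqP: neq_rr'; lia.
Qed.

End CubeTerms.

Section TwoLines.
Variable F : fieldType.
Variables (G H : {poly F}) (c1 d1 c2 d2 p1 p2 : F) (m : nat).
Hypotheses (p1_neq0 : p1 != 0) (p2_neq0 : p2 != 0).
Hypothesis det_neq0 : c1 * d2 * p1 ^+ m != c2 * d1 * p2 ^+ m.
Hypothesis rel1 : forall n,
  c1 * (G`_n * p1 ^+ n) + (if (n < m)%N then 0 else d1 * (H`_(n - m) * p1 ^+ (n - m))) = 0.
Hypothesis rel2 : forall n,
  c2 * (G`_n * p2 ^+ n) + (if (n < m)%N then 0 else d2 * (H`_(n - m) * p2 ^+ (n - m))) = 0.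

Let coefG_eq0 n : G`_n = 0.
Proof.
apply/eqP; apply: contraR det_neq0 => Gn_neq0.
have [lt_nm | le_mn] := ltnP n m.
  move: (rel1 n) (rel2 n); rewrite lt_nm !addr0 => /eqP + /eqP.
  rewrite !mulf_eq0 !expf_eq0 (negbTE Gn_neq0) (negbTE p1_neq0) (negbTE p2_neq0) !andbF !orbF.
  by move=> /eqP-> /eqP->; rewrite !mul0r.
have [q1 q2] : p1 ^+ n = p1 ^+ (n - m) * p1 ^+ m /\ p2 ^+ n = p2 ^+ (n - m) * p2 ^+ m.
  by rewrite -!exprD subnK.
have : G`_n * (p1 ^+ (n - m) * p2 ^+ (n - m)) * (c1 * d2 * p1 ^+ m - c2 * d1 * p2 ^+ m) = 0.
  transitivity (d2 * p2 ^+ (n - m) * (c1 * (G`_n * p1 ^+ n) + d1 * (H`_(n - m) * p1 ^+ (n - m)))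
    - d1 * p1 ^+ (n - m) * (c2 * (G`_n * p2 ^+ n) + d2 * (H`_(n - m) * p2 ^+ (n - m)))).
    by rewrite q1 q2; ring.
  by move: (rel1 n) (rel2 n); rewrite ltnNge le_mn /= => -> ->; rewrite !mulr0 subr0.
move/eqP; rewrite !mulf_eq0 !expf_eq0 (negbTE Gn_neq0) (negbTE p1_neq0) (negbTE p2_neq0).
by rewrite !andbF subr_eq0.
Qed.

Lemma two_lines_eq0 : G = 0 /\ H = 0.
Proof.
split; apply/polyP => n; rewrite coef0 ?coefG_eq0 //.
apply/eqP; apply: contraR det_neq0 => Hn_neq0.
move: (rel1 (n + m)) (rel2 (n + m)).
rewrite !coefG_eq0 !mul0r !mulr0 !add0r ltnNge leq_addl addnK /= => /eqP + /eqP.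
rewrite !mulf_eq0 !expf_eq0 (negbTE Hn_neq0) (negbTE p1_neq0) (negbTE p2_neq0) !andbF !orbF.
by move=> /eqP-> /eqP->; rewrite !mulr0 !mul0r.
Qed.

End TwoLines.

Section CubeSums.
Variable F : fieldType.
Variables (G H : 'I_3 -> {poly F}) (k m : 'I_3 -> nat).

Definition cube_sum (c d : 'I_3 -> F) (p : F) : {poly F} :=
  \sum_(r < 3) cube_term (G r) (c r) p (r + 3 * k r)
  + \sum_(r < 3) cube_term (H r) (d r) p (r + 3 * (k r + m r)).

Lemma coef_cube_sum c d p (r : 'I_3) n : (cube_sum c d p)`_(r + 3 * (k r + n)) =
  c r * ((G r)`_n * p ^+ n)
  + (if (n < m r)%N then 0 else d r * ((H r)`_(n - m r) * p ^+ (n - m r))).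
Proof.
rewrite coefD !coef_sum (bigD1 r) //= [X in _ + X](bigD1 r) //=.
rewrite !coef_cube_term_same ltnNge leq_addr addKn.
rewrite ltn_add2l subnDl !big1 ?addr0 // => r' neq_r'r;
  by rewrite coef_cube_term_other // eq_sym.
Qed.

Lemma cube_sum_eq0 c1 d1 c2 d2 p1 p2 : p1 != 0 -> p2 != 0 ->
  (forall r, c1 r * d2 r * p1 ^+ m r != c2 r * d1 r * p2 ^+ m r) ->
  cube_sum c1 d1 p1 = 0 -> cube_sum c2 d2 p2 = 0 -> forall r, G r = 0 /\ H r = 0.
Proof.
move=> p1_neq0 p2_neq0 det_neq0 sum1 sum2 r.
by apply: (two_lines_eq0 p1_neq0 p2_neq0 (det_neq0 r)) => n;
  rewrite -coef_cube_sum ?sum1 ?sum2 coef0.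
Qed.

End CubeSums.

Lemma P2_commr (a b : CC) : commr_rmorph (polyC \o polyC : CC -> Cxy) (Pab a b 2).
Proof. by move=> x; apply: mulrC. Qed.

Notation evalP2 a b := (horner_morph (P2_commr a b)).

Lemma P3_commr (a b : CC) : commr_rmorph (evalP2 a b) (Pab a b 3).
Proof. by move=> x; apply: mulrC. Qed.

(* [evalP23 a b q] is q(P_2, P_3) for q in C[s][t]: the inner variable s is
   sent to P_2 and the outer variable t to P_3. *)
Notation evalP23 a b := (horner_morph (P3_commr a b)).

Lemma xline_commr (U : CC) : commr_rmorph (polyC : CC -> {poly CC}) (U%:P * 'X).
Proof. by move=> x; apply: mulrC. Qed.

Notation xline_eval U := (horner_morph (xline_commr U)).

Lemma line_commr (U V : CC) : commr_rmorph (xline_eval U) (V%:P * 'X).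
Proof. by move=> x; apply: mulrC. Qed.

(* Restriction to the line t |-> (U t, V t): [line_eval U V f] is f(U t, V t). *)
Notation line_eval U V := (horner_morph (line_commr U V)).

Definition Pab_at (a b U V : CC) (j : nat) : CC :=
  a * U ^+ j + b * V ^+ j + (- (a * U + b * V)) ^+ j.

Section Evaluations.
Variables a b : CC.

Lemma evalP23_cst c : evalP23 a b c%:P%:P = cstxy c.
Proof. by rewrite horner_morphC /= horner_morphC. Qed.

Lemma evalP23_s : evalP23 a b 'X%:P = Pab a b 2.
Proof. by rewrite horner_morphC /= horner_morphX. Qed.

Lemma evalP23_t : evalP23 a b 'X = Pab a b 3.
Proof. exact: horner_morphX. Qed.

Lemma A23_evalP23 f : A23 a b f -> exists q, evalP23 a b q = f.
Proof.
elim=> [c|g [->|->]|g h _ [q1 <-] _ [q2 <-]|g h _ [q1 <-] _ [q2 <-]].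
- by exists c%:P%:P; rewrite evalP23_cst.
- by exists 'X%:P; rewrite evalP23_s.
- by exists 'X; rewrite evalP23_t.
- by exists (q1 + q2); rewrite rmorphD.
- by exists (q1 * q2); rewrite rmorphM.
Qed.

Lemma line_eval_cst U V c : line_eval U V (cstxy c) = c%:P.
Proof. by rewrite /cstxy horner_morphC /= horner_morphC. Qed.

Lemma line_eval_Pab U V j : line_eval U V (Pab a b j) = (Pab_at a b U V j)%:P * 'X^j.
Proof.
rewrite /Pab !rmorphD !rmorphM !rmorphXn !rmorphB !rmorphN !rmorphM /= !line_eval_cst.
rewrite /varx /vary horner_morphC /= !horner_morphX /Pab_at.
have -> : - (a%:P * (U%:P * 'X)) - b%:P * (V%:P * 'X) = (- (a * U + b * V))%:P * 'X.
  by rewrite rmorphN rmorphD !rmorphM; ring.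
by rewrite !exprMn rmorphN; ring.
Qed.

Lemma line_eval_evalP23 U V q : line_eval U V (Pab a b 2) = 0 ->
  line_eval U V (evalP23 a b q) = map_poly (coefp 0) q \Po line_eval U V (Pab a b 3).
Proof.
move=> P2_line0.
have -> : evalP23 a b q = (map_poly (evalP2 a b) q).[Pab a b 3] by [].
rewrite /comp_poly -horner_map -!map_poly_comp; congr (_.[_]).
apply: eq_map_poly => c /=.
have -> : evalP2 a b c = (map_poly (polyC \o polyC : CC -> Cxy) c).[Pab a b 2] by [].
rewrite -horner_map /= P2_line0 -map_poly_comp.
have -> : map_poly (line_eval U V \o (polyC \o polyC : CC -> Cxy)) c = map_poly polyC c.
  by apply: eq_map_poly => k /=; rewrite -[k%:P%:P]/(cstxy k) line_eval_cst.
by rewrite -[0 : {poly CC}]/(polyC 0) horner_map horner_coef0.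
Qed.

End Evaluations.

Lemma inner_divX (R : nzRingType) (q : {poly {poly R}}) : map_poly (coefp 0) q = 0 ->
  q = map_poly (drop_poly 1) q * ('X)%:P.
Proof.
move=> q0; apply/polyP => i; rewrite coefMC coef_map /=.
have qi0 : q`_i`_0 = 0.
  by move: (congr1 (fun p : {poly R} => p`_i) q0); rewrite coef_map coef0.
rewrite -{1}(poly_take_drop 1 q`_i) expr1.
have -> : take_poly 1 q`_i = 0 by apply/polyP => -[|k]; rewrite coef_take_poly coef0.
by rewrite add0r.
Qed.

Lemma inner_size_bound (R : nzRingType) n (q : 'I_n -> {poly {poly R}}) :
  exists N, forall j i, leq (size (q j)`_i) N.
Proof.
pose N := \max_(j < n) \max_(i < size (q j)) size (nth 0%R (q j) i).
exists N => j i.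
apply: leq_trans (leq_bigmax j); case: (ltnP i (size (q j))) => [lt_iq | le_qi].
  exact: (leq_bigmax (Ordinal lt_iq)).
by rewrite nth_default ?size_poly0.
Qed.

Section Descent.
Variables (a b : CC) (n : nat) (w : 'I_n -> Cxy).
Hypothesis P2_neq0 : Pab a b 2 != 0.
Hypothesis constant_in_s : forall q : 'I_n -> {poly {poly CC}},
  \sum_(j < n) evalP23 a b (q j) * w j = 0 -> forall j, map_poly (coefp 0) (q j) = 0.

Lemma evalP23_relation_eq0 (q : 'I_n -> {poly {poly CC}}) :
  \sum_(j < n) evalP23 a b (q j) * w j = 0 -> forall j, evalP23 a b (q j) = 0.
Proof.
have [N] := inner_size_bound q; elim: N q => [|N IHN] q q_le rel j.
  suff -> : q j = 0 by rewrite rmorph0.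
  by apply/polyP => i; rewrite coef0; apply/eqP; rewrite -size_poly_eq0 -leqn0.
pose q' j := map_poly (drop_poly 1) (q j).
have evalP23_q j' : evalP23 a b (q j') = evalP23 a b (q' j') * Pab a b 2.
  by rewrite {1}(inner_divX (constant_in_s rel j')) rmorphM /= evalP23_s.
have rel' : \sum_(j < n) evalP23 a b (q' j) * w j = 0.
  apply/eqP; rewrite -(mulIr_eq0 _ (mulIf P2_neq0)) mulr_suml; apply/eqP.
  by rewrite -[RHS]rel; apply: eq_bigr => j' _; rewrite evalP23_q; ring.
have q'_le j' i : leq (size (q' j')`_i) N.
  by rewrite coef_map /= size_drop_poly leq_subLR add1n.
by rewrite evalP23_q (IHN q' q'_le rel') mul0r.
Qed.

End Descent.

Definition join3 (w w' : 'I_3 -> Cxy) (j : 'I_(3 + 3)) : Cxy :=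
  match split j with inl r => w r | inr r => w' r end.

Section IndependenceCriterion.
Variables (a b : CC) (w w' : 'I_3 -> Cxy) (k m : 'I_3 -> nat).

Lemma line_eval_relation U V p (c d : 'I_3 -> CC) (q : 'I_(3 + 3) -> {poly {poly CC}}) :
  line_eval U V (Pab a b 2) = 0 -> line_eval U V (Pab a b 3) = p%:P * 'X^3 ->
  (forall r, line_eval U V (w r) = (c r)%:P * 'X^(r + 3 * k r)) ->
  (forall r, line_eval U V (w' r) = (d r)%:P * 'X^(r + 3 * (k r + m r))) ->
  line_eval U V (\sum_(j < 3 + 3) evalP23 a b (q j) * join3 w w' j) =
  cube_sum (fun r => map_poly (coefp 0) (q (lshift 3 r)))
           (fun r => map_poly (coefp 0) (q (rshift 3 r))) k m c d p.
Proof.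
move=> P2_line P3_line w_line w'_line.
rewrite rmorph_sum big_split_ord /=; congr (_ + _); apply: eq_bigr => r _.
  rewrite rmorphM /= line_eval_evalP23 // P3_line /join3.
  by rewrite -[lshift 3 r]/(unsplit (inl r)) unsplitK w_line.
rewrite rmorphM /= line_eval_evalP23 // P3_line /join3.
by rewrite -[rshift 3 r]/(unsplit (inr r)) unsplitK w'_line.
Qed.

Lemma join3_indep U1 U2 V p1 p2 (c1 d1 c2 d2 : 'I_3 -> CC) :
  Pab a b 2 != 0 -> p1 != 0 -> p2 != 0 ->
  line_eval U1 V (Pab a b 2) = 0 -> line_eval U1 V (Pab a b 3) = p1%:P * 'X^3 ->
  line_eval U2 V (Pab a b 2) = 0 -> line_eval U2 V (Pab a b 3) = p2%:P * 'X^3 ->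
  (forall r, line_eval U1 V (w r) = (c1 r)%:P * 'X^(r + 3 * k r)) ->
  (forall r, line_eval U1 V (w' r) = (d1 r)%:P * 'X^(r + 3 * (k r + m r))) ->
  (forall r, line_eval U2 V (w r) = (c2 r)%:P * 'X^(r + 3 * k r)) ->
  (forall r, line_eval U2 V (w' r) = (d2 r)%:P * 'X^(r + 3 * (k r + m r))) ->
  (forall r, c1 r * d2 r * p1 ^+ m r != c2 r * d1 r * p2 ^+ m r) ->
  lin_indep_over (A23 a b) (join3 w w').
Proof.
move=> P2_neq0 p1_neq0 p2_neq0 P2_line1 P3_line1 P2_line2 P3_line2 w_line1 w'_line1
  w_line2 w'_line2 det_neq0 c Ac rel.
have [q qE] := fin_all_exists (fun j => A23_evalP23 (Ac j)).
have relq : \sum_(j < 3 + 3) evalP23 a b (q j) * join3 w w' j = 0.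
  by rewrite -[RHS]rel; apply: eq_bigr => j _; rewrite qE.
move=> j; rewrite -qE; apply: (evalP23_relation_eq0 P2_neq0 _ relq) => {j}q' rel' j.
have := line_eval_relation q' P2_line1 P3_line1 w_line1 w'_line1.
rewrite rel' rmorph0 => /esym sum1.
have := line_eval_relation q' P2_line2 P3_line2 w_line2 w'_line2.
rewrite rel' rmorph0 => /esym sum2.
have := cube_sum_eq0 p1_neq0 p2_neq0 det_neq0 sum1 sum2.
by rewrite -(splitK j); case: (split j) => r /(_ r) [].
Qed.

End IndependenceCriterion.

(** * The two lines on which P_2 vanishes *)

Section QuadraticExtension.
Variables (R : comNzRingType) (D : R).

(* Arithmetic in R[t]/(t^2 - D) on pairs x = x.1 + t x.2. *)
Definition qmul (x y : R * R) : R * R :=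
  (x.1 * y.1 + D * (x.2 * y.2), x.1 * y.2 + x.2 * y.1).

Definition qexp (x : R * R) (j : nat) : R * R := iter j (qmul x) (1, 0).

Variable t : R.
Hypothesis t_sq : t ^+ 2 = D.

Lemma qexpE c d j : (c + t * d) ^+ j = (qexp (c, d) j).1 + t * (qexp (c, d) j).2.
Proof.
elim: j => [|j IHj]; first by rewrite expr0 /= mulr0 addr0.
by rewrite exprS IHj /qexp iterS -/(qexp _ j) /qmul /= -t_sq; ring.
Qed.

End QuadraticExtension.

Definition disc (a b : CC) : CC := - (a * b * (1 + a + b)).

Definition slope_pair (a b : CC) (j : nat) : CC * CC :=
  let u := qexp (disc a b) (- (a * b), 1) j in
  let w := qexp (disc a b) (a ^+ 2 * b - b * (a * (1 + a)), - a) j in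
  (a * u.1 + b * (a * (1 + a)) ^+ j + w.1, a * u.2 + w.2).

Lemma Pab_at_slope (a b t : CC) j : t ^+ 2 = disc a b ->
  Pab_at a b (- (a * b) + t) (a * (1 + a)) j = (slope_pair a b j).1 + t * (slope_pair a b j).2.
Proof.
move=> t_sq; rewrite /Pab_at /slope_pair /=.
have -> : - (a * (- (a * b) + t) + b * (a * (1 + a))) =
    a ^+ 2 * b - b * (a * (1 + a)) + t * - a by ring.
by rewrite -{1}[t]mulr1 !(qexpE t_sq); ring.
Qed.

Lemma Pab_at_slope2 (a b t : CC) : t ^+ 2 = disc a b ->
  Pab_at a b (- (a * b) + t) (a * (1 + a)) 2 = 0.
Proof.
by move=> t_sq; rewrite (Pab_at_slope _ t_sq) /slope_pair /qexp /= /qmul /= /disc; ring.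
Qed.

Definition W4 (a b : CC) : CC := a ^+ 2 * b + a ^+ 2 + a * b ^+ 2 - 6 * a * b + a + b ^+ 2 + b.

Definition W5 (a b : CC) : CC :=
  a ^+ 4 * b ^+ 2 - a ^+ 4 * b + a ^+ 4 + 2 * a ^+ 3 * b ^+ 3 - 5 * a ^+ 3 * b ^+ 2
  - 5 * a ^+ 3 * b + 2 * a ^+ 3 + a ^+ 2 * b ^+ 4 - 5 * a ^+ 2 * b ^+ 3 + 21 * a ^+ 2 * b ^+ 2
  - 5 * a ^+ 2 * b + a ^+ 2 - a * b ^+ 4 - 5 * a * b ^+ 3 - 5 * a * b ^+ 2 - a * b + b ^+ 4
  + 2 * b ^+ 3 + b ^+ 2.

Definition nondeg (a b : CC) : CC :=
  a ^+ 9 * b ^+ 3 * (a + 1) ^+ 7 * (b + 1) * (a + b) * (a + b + 1) ^+ 4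
  * (a - b) * (a - 1) * (b - 1).

Lemma conj_norm (t x y : CC) : (x + t * y) * (x + - t * y) = x ^+ 2 - t ^+ 2 * y ^+ 2.
Proof. by ring. Qed.

Section ConjugateSlopes.
Variables a b t : CC.
Hypothesis t_sq : t ^+ 2 = disc a b.

Let Nt_sq : (- t) ^+ 2 = disc a b. Proof. by rewrite sqrrN. Qed.

Local Notation rho j := (Pab_at a b (- (a * b) + t) (a * (1 + a)) j).
Local Notation rho' j := (Pab_at a b (- (a * b) + - t) (a * (1 + a)) j).

Lemma slope_norm3 :
  rho 3 * rho' 3 = a ^+ 5 * b ^+ 2 * (a + 1) ^+ 4 * (b + 1) * (a + b) * (a + b + 1) ^+ 2.
Proof.
rewrite (Pab_at_slope _ t_sq) (Pab_at_slope _ Nt_sq) conj_norm t_sq.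
by rewrite /slope_pair /qexp /= /qmul /= /disc; ring.
Qed.

Lemma slope_norm4 : rho 4 * rho' 4 =
  a ^+ 6 * b ^+ 2 * (a + 1) ^+ 5 * (b + 1) * (a + b) * (a + b + 1) ^+ 2 * W4 a b.
Proof.
rewrite (Pab_at_slope _ t_sq) (Pab_at_slope _ Nt_sq) conj_norm t_sq.
by rewrite /slope_pair /qexp /= /qmul /= /disc /W4; ring.
Qed.

Lemma slope_norm5 : rho 5 * rho' 5 =
  a ^+ 7 * b ^+ 2 * (a + 1) ^+ 6 * (b + 1) * (a + b) * (a + b + 1) ^+ 2 * W5 a b.
Proof.
rewrite (Pab_at_slope _ t_sq) (Pab_at_slope _ Nt_sq) conj_norm t_sq.
by rewrite /slope_pair /qexp /= /qmul /= /disc /W5; ring.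
Qed.

Lemma slope_cross36 : rho' 6 * rho 3 ^+ 2 - rho 6 * rho' 3 ^+ 2 = - 4 * t * nondeg a b.
Proof.
rewrite !(Pab_at_slope _ t_sq) !(Pab_at_slope _ Nt_sq).
have -> : forall x3 y3 x6 y6,
    (x6 + - t * y6) * (x3 + t * y3) ^+ 2 - (x6 + t * y6) * (x3 + - t * y3) ^+ 2 =
    2 * t * (2 * x6 * x3 * y3 - y6 * x3 ^+ 2 - t ^+ 2 * y6 * y3 ^+ 2).
  by move=> *; ring.
by rewrite t_sq /slope_pair /qexp /= /qmul /= /disc /nondeg; ring.
Qed.

Lemma slope_cross47 : rho 4 * rho' 7 * rho 3 - rho' 4 * rho 7 * rho' 3 =
  2 * t * a * (a + 1) * nondeg a b * (2 * a * b - W4 a b).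
Proof.
rewrite !(Pab_at_slope _ t_sq) !(Pab_at_slope _ Nt_sq).
have -> : forall x3 y3 x4 y4 x7 y7,
    (x4 + t * y4) * (x7 + - t * y7) * (x3 + t * y3)
      - (x4 + - t * y4) * (x7 + t * y7) * (x3 + - t * y3) =
    2 * t * (y4 * x7 * x3 - x4 * y7 * x3 + x4 * x7 * y3 - t ^+ 2 * y4 * y7 * y3).
  by move=> *; ring.
by rewrite t_sq /slope_pair /qexp /= /qmul /= /disc /nondeg /W4; ring.
Qed.

Lemma slope_cross58 : rho 5 * rho' 8 * rho 3 - rho' 5 * rho 8 * rho' 3 =
  2 * t * a ^+ 2 * (a + 1) ^+ 2 * nondeg a b * (- W5 a b - a * b * (a + b) * (a + 1) * (b + 1)).
Proof.
rewrite !(Pab_at_slope _ t_sq) !(Pab_at_slope _ Nt_sq).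
have -> : forall x3 y3 x5 y5 x8 y8,
    (x5 + t * y5) * (x8 + - t * y8) * (x3 + t * y3)
      - (x5 + - t * y5) * (x8 + t * y8) * (x3 + - t * y3) =
    2 * t * (y5 * x8 * x3 - x5 * y8 * x3 + x5 * x8 * y3 - t ^+ 2 * y5 * y8 * y3).
  by move=> *; ring.
by rewrite t_sq /slope_pair /qexp /= /qmul /= /disc /nondeg /W5; ring.
Qed.

End ConjugateSlopes.

Definition sdisc (a b : CC) : CC := sqrtc (disc a b).

(* P_2 vanishes on the two lines t |-> (u_i t, v0 t). *)
Definition u1 (a b : CC) : CC := - (a * b) + sdisc a b.
Definition u2 (a b : CC) : CC := - (a * b) + - sdisc a b.
Definition v0 (a : CC) : CC := a * (1 + a).

Section LowerBound.
Variables a b : CC.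
Hypotheses (a_neq0 : a != 0) (a_neqN1 : a != -1) (b_neq0 : b != 0) (b_neqN1 : b != -1).
Hypotheses (ab_neq0 : a + b != 0) (ab_neqN1 : a + b != -1).
Hypotheses (a_neq_b : a != b) (a_neq1 : a != 1) (b_neq1 : b != 1).

Local Notation rho1 j := (Pab_at a b (u1 a b) (v0 a) j).
Local Notation rho2 j := (Pab_at a b (u2 a b) (v0 a) j).

Let sdisc_sq : sdisc a b ^+ 2 = disc a b. Proof. exact: sqr_sqrtc. Qed.
Let Nsdisc_sq : (- sdisc a b) ^+ 2 = disc a b. Proof. by rewrite sqrrN. Qed.

Let a1_neq0 : a + 1 != 0. Proof. by rewrite addr_eq0. Qed.
Let b1_neq0 : b + 1 != 0. Proof. by rewrite addr_eq0. Qed.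
Let ab1_neq0 : a + b + 1 != 0. Proof. by rewrite addr_eq0. Qed.

Let sdisc_neq0 : sdisc a b != 0.
Proof.
rewrite sqrtc_eq0 /disc oppr_eq0.
have -> : a * b * (1 + a + b) = a * b * (a + b + 1) by ring.
by rewrite !mulf_neq0.
Qed.

Let aNb_neq0 : a - b != 0. Proof. by rewrite subr_eq0. Qed.
Let aN1_neq0 : a - 1 != 0. Proof. by rewrite subr_eq0. Qed.
Let bN1_neq0 : b - 1 != 0. Proof. by rewrite subr_eq0. Qed.
Let two_neq0 : 2 != 0 :> CC. Proof. by rewrite pnatr_eq0. Qed.
Let four_neq0 : 4 != 0 :> CC. Proof. by rewrite pnatr_eq0. Qed.

Lemma P2_neq0 : Pab a b 2 != 0.
Proof.
apply/eqP => /(congr1 (line_eval 1 0)) /eqP; rewrite line_eval_Pab rmorph0.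
rewrite mulf_eq0 polyC_eq0 expf_eq0 polyX_eq0 andbF orbF /Pab_at.
have -> : a * 1 ^+ 2 + b * 0 ^+ 2 + (- (a * 1 + b * 0)) ^+ 2 = a * (a + 1) by ring.
by rewrite mulf_eq0 (negbTE a_neq0) (negbTE a1_neq0).
Qed.

Lemma P2_line1 : line_eval (u1 a b) (v0 a) (Pab a b 2) = 0.
Proof. by rewrite line_eval_Pab (Pab_at_slope2 sdisc_sq) mul0r. Qed.

Lemma P2_line2 : line_eval (u2 a b) (v0 a) (Pab a b 2) = 0.
Proof. by rewrite line_eval_Pab (Pab_at_slope2 Nsdisc_sq) mul0r. Qed.

Lemma rho3_neq0 : rho1 3 != 0 /\ rho2 3 != 0.
Proof.
have : rho1 3 * rho2 3 != 0.
  by rewrite /u1 /u2 /v0 (slope_norm3 sdisc_sq) !mulf_neq0 ?expf_neq0.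
by rewrite mulf_eq0 negb_or => /andP.
Qed.

Lemma Rab_Pab j : (2 <= j)%N -> Rab a b (Pab a b j).
Proof. by move=> le2j; apply: subalg_gen; exists j. Qed.

Lemma line_eval_Pab2 U V i j :
  line_eval U V (Pab a b i * Pab a b j) = (Pab_at a b U V i * Pab_at a b U V j)%:P * 'X^(i + j).
Proof. by rewrite rmorphM /= !line_eval_Pab rmorphM exprD; ring. Qed.

Lemma cross36_neq0 : rho2 6 * rho1 3 ^+ 2 != rho1 6 * rho2 3 ^+ 2.
Proof.
by rewrite -subr_eq0 /u1 /u2 /v0 (slope_cross36 sdisc_sq) !mulf_neq0 ?expf_neq0 ?oppr_eq0.
Qed.

(* The determinant pairing P_4 with P_4 P_6 (resp. P_5 with P_5 P_6) on the two lines
   has the factor W4 (resp. W5); where that factor vanishes, P_7 (resp. P_8) is used. *)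
Lemma residue1_witness : exists (w : Cxy) (m : nat) (d1 d2 : CC), [/\ Rab a b w,
  line_eval (u1 a b) (v0 a) w = d1%:P * 'X^(1 + 3 * (1 + m)),
  line_eval (u2 a b) (v0 a) w = d2%:P * 'X^(1 + 3 * (1 + m)) &
  rho1 4 * d2 * rho1 3 ^+ m != rho2 4 * d1 * rho2 3 ^+ m].
Proof.
have [W4_0 | W4_neq0] := eqVneq (W4 a b) 0.
  exists (Pab a b 7), 1%N, (rho1 7), (rho2 7).
  split; [exact: Rab_Pab | exact: line_eval_Pab | exact: line_eval_Pab |].
  rewrite -subr_eq0 !expr1 /u1 /u2 /v0 (slope_cross47 sdisc_sq) W4_0 subr0.
  by rewrite !mulf_neq0 ?expf_neq0.
exists (Pab a b 4 * Pab a b 6), 2%N, (rho1 4 * rho1 6), (rho2 4 * rho2 6).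
split; [by apply: subalg_mul; apply: Rab_Pab | exact: line_eval_Pab2 | exact: line_eval_Pab2 |].
rewrite -subr_eq0.
have -> : rho1 4 * (rho2 4 * rho2 6) * rho1 3 ^+ 2 - rho2 4 * (rho1 4 * rho1 6) * rho2 3 ^+ 2 =
    rho1 4 * rho2 4 * (rho2 6 * rho1 3 ^+ 2 - rho1 6 * rho2 3 ^+ 2) by ring.
rewrite mulf_neq0 ?subr_eq0 ?cross36_neq0 // /u1 /u2 /v0 (slope_norm4 sdisc_sq).
by rewrite !mulf_neq0 ?expf_neq0.
Qed.

Lemma residue2_witness : exists (w : Cxy) (m : nat) (d1 d2 : CC), [/\ Rab a b w,
  line_eval (u1 a b) (v0 a) w = d1%:P * 'X^(2 + 3 * (1 + m)),
  line_eval (u2 a b) (v0 a) w = d2%:P * 'X^(2 + 3 * (1 + m)) &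
  rho1 5 * d2 * rho1 3 ^+ m != rho2 5 * d1 * rho2 3 ^+ m].
Proof.
have [W5_0 | W5_neq0] := eqVneq (W5 a b) 0.
  exists (Pab a b 8), 1%N, (rho1 8), (rho2 8).
  split; [exact: Rab_Pab | exact: line_eval_Pab | exact: line_eval_Pab |].
  rewrite -subr_eq0 !expr1 /u1 /u2 /v0 (slope_cross58 sdisc_sq) W5_0 oppr0 sub0r.
  by rewrite !mulf_neq0 ?expf_neq0 ?oppr_eq0 // !mulf_neq0.
exists (Pab a b 5 * Pab a b 6), 2%N, (rho1 5 * rho1 6), (rho2 5 * rho2 6).
split; [by apply: subalg_mul; apply: Rab_Pab | exact: line_eval_Pab2 | exact: line_eval_Pab2 |].
rewrite -subr_eq0.
have -> : rho1 5 * (rho2 5 * rho2 6) * rho1 3 ^+ 2 - rho2 5 * (rho1 5 * rho1 6) * rho2 3 ^+ 2 =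
    rho1 5 * rho2 5 * (rho2 6 * rho1 3 ^+ 2 - rho1 6 * rho2 3 ^+ 2) by ring.
rewrite mulf_neq0 ?subr_eq0 ?cross36_neq0 // /u1 /u2 /v0 (slope_norm5 sdisc_sq).
by rewrite !mulf_neq0 ?expf_neq0.
Qed.

Lemma lower_bound :
  exists v : 'I_6 -> Cxy, (forall j, Rab a b (v j)) /\ lin_indep_over (A23 a b) v.
Proof.
have [w1 [m1 [d11 [d12 [Rw1 w1_line1 w1_line2 det1]]]]] := residue1_witness.
have [w2 [m2 [d21 [d22 [Rw2 w2_line1 w2_line2 det2]]]]] := residue2_witness.
have [p1_neq0 p2_neq0] := rho3_neq0.
pose w (r : 'I_3) := [:: 1; Pab a b 4; Pab a b 5]`_r.
pose w' (r : 'I_3) := [:: Pab a b 6; w1; w2]`_r.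
exists (join3 w w'); split.
  move=> j; rewrite /join3; case: (@split 3 3 j) => -[[|[|[|//]]] ?] //=;
    by [exact: in_subalg1 | exact: Rab_Pab].
apply: (join3_indep (k := fun r => [:: 0; 1; 1]`_r) (m := fun r => [:: 2; m1; m2]`_r)
  (c1 := fun r => [:: 1; rho1 4; rho1 5]`_r) (d1 := fun r => [:: rho1 6; d11; d21]`_r)
  (c2 := fun r => [:: 1; rho2 4; rho2 5]`_r) (d2 := fun r => [:: rho2 6; d12; d22]`_r)
  P2_neq0 p1_neq0 p2_neq0 P2_line1 (line_eval_Pab _ _ _ _ _) P2_line2 (line_eval_Pab _ _ _ _ _))
  => -[[|[|[|//]]] ?] //=; rewrite ?rmorph1 ?polyC1 ?mul1r ?expr0 //.
  all: exact: line_eval_Pab || exact: cross36_neq0.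
Qed.

End LowerBound.

Theorem proposition5p8 (a b : CC) :
  a != 0 -> a != -1 -> b != 0 -> b != -1 -> a + b != 0 -> a + b != -1 ->
  a != b -> a != 1 -> b != 1 ->
  has_rank_over (A23 a b) (Rab a b) 6.
Proof.
move=> a_neq0 a_neqN1 b_neq0 b_neqN1 ab_neq0 ab_neqN1 a_neq_b a_neq1 b_neq1.
split; first exact: lower_bound.
by move=> v _; apply: upper_bound.
Qed.
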